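(* Suppose $\alpha$ is such that (H1) holds. Then there exists $z_{\min}$ in the interior of $I$ such that $\alpha'(z)<0$ on $[a,z_{\min})$, $\alpha'(z_{\min})=0$ and $\alpha'(z)>0$ on $(z_{\min},b]$; moreover, for every $z_2\in[a,b]$, $\partial_{z_1}\lambda(z,z_2)<0$ for $z\in[a,z_{\min})$, $\partial_{z_1}\lambda(z_{\min},z_2)=0$, and $\partial_{z_1}\lambda(z,z_2)>0$ for $z\in(z_{\min},b]$.
   Context: Let $D\subset\mathbb R^N$ be a bounded smooth domain, outward normal $\nu$; $I=(a,b)$; $m\in C^\beta(\bar D)$ positive nonconstant; $\alpha:\bar I\to(0,\infty)$ smooth. For $\alpha_1,\alpha_2>0$ let $\Theta_{\alpha_2}$ be the unique positive solution of $\alpha_2\Delta\Theta+(m-\Theta)\Theta=0$ in $D$, $\partial_\nu\Theta=0$, and $\Lambda(\alpha_1,\alpha_2)$ the smallest eigenvalue of $\alpha_1\Delta\Phi+(m-\Theta_{\alpha_2})\Phi+\Lambda\Phi=0$ in $D$, $\partial_\nu\Phi=0$; it is known that $\Lambda$ is smooth on $(0,\infty)^2$ and $\partial_{\alpha_1}\Lambda>0$. Set $\lambda(z_1,z_2)=\Lambda(\alpha(z_1),\alpha(z_2))$. (H1): there is $K_\lambda>0$ with $2K_\lambda\le\partial^2_{z_1}\lambda(z_1,z_2)\le2/K_\lambda$ on $I\times I$, and $\partial_{z_1}\lambda(a,a)<0$, $\partial_{z_1}\lambda(b,b)>0$. *)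

From Stdlib Require Import Reals List.
From Coquelicot Require Import Coquelicot.
Open Scope R_scope.

Definition smooth_on (U : R -> Prop) (f : R -> R) : Prop :=
  forall (n : nat) (x : R), U x -> ex_derive (Derive_n f n) x.

Definition pd1 (f : R -> R -> R) : R -> R -> R :=
  fun x y => Derive (fun t => f t y) x.
Definition pd2 (f : R -> R -> R) : R -> R -> R :=
  fun x y => Derive (fun t => f x t) y.

(* Iterated mixed partial derivative: [true] = d/dx, [false] = d/dy,
   applied from the right end of the list first. *)
Fixpoint pdl (l : list bool) (f : R -> R -> R) : R -> R -> R :=
  match l with
  | nil => f
  | cons true l' => pd1 (pdl l' f)
  | cons false l' => pd2 (pdl l' f)
  end.

Definition smooth2_on (U : R -> R -> Prop) (f : R -> R -> R) : Prop :=
  forall (l : list bool) (x y : R), U x y ->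
    ex_derive (fun t => pdl l f t y) x /\
    ex_derive (fun t => pdl l f x t) y /\
    continuity_2d_pt (pdl l f) x y.

Definition lam (Lam : R -> R -> R) (alpha : R -> R) (z1 z2 : R) : R :=
  Lam (alpha z1) (alpha z2).
Definition d1lam (Lam : R -> R -> R) (alpha : R -> R) (z1 z2 : R) : R :=
  Derive (fun w => lam Lam alpha w z2) z1.
Definition d11lam (Lam : R -> R -> R) (alpha : R -> R) (z1 z2 : R) : R :=
  Derive (fun w => d1lam Lam alpha w z2) z1.

(* By the chain rule, [d1lam z z2 = alpha' z * (d/dx1 Lambda)(alpha z, alpha z2)] and the second factor
   is positive, so for every [z2] the sign of [d1lam (.) z2] is that of [alpha']. Fix an interior [m]: the
   function [z |-> d1lam z m] has derivative [d11lam (.) m >= 2K > 0], hence is strictly increasing, and by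
   (H1) it is negative at [a] and positive at [b]. Its unique zero [zmin] therefore separates the points
   where [alpha'] (and every [d1lam (.) z2]) is negative from those where it is positive. *)
From Stdlib Require Import Reals List Lra Psatz.
From Coquelicot Require Import Coquelicot.
Open Scope R_scope.

Lemma nondecreasing_of_derive_pos (f df : R -> R) (a b : R) :
  (forall c, a < c < b -> is_derive f c (df c)) ->
  (forall c, a < c < b -> 0 < df c) ->
  (forall c, a <= c <= b -> continuity_pt f c) ->
  forall x y, a <= x -> x <= y -> y <= b -> f x <= f y.
Proof.
intros Hder Hpos Hcont x y Hx Hxy Hy.
(* [Rmax 0 (df c)] agrees with [df c] inside, and is nonnegative even at the endpoints that
   [MVT_gen] may return. *)
destruct (MVT_gen f x y (fun c => Rmax 0 (df c))) as [c [_ Hmvt]].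
- intros c Hc; rewrite Rmin_left, Rmax_right in Hc by lra.
  rewrite Rmax_right by (apply Rlt_le, Hpos; lra); apply Hder; lra.
- intros c Hc; rewrite Rmin_left, Rmax_right in Hc by lra; apply Hcont; lra.
- assert (0 <= Rmax 0 (df c)) by apply Rmax_l; nra.
Qed.

Lemma strict_increasing_of_derive_pos (f df : R -> R) (a b : R) :
  (forall c, a < c < b -> is_derive f c (df c)) ->
  (forall c, a < c < b -> 0 < df c) ->
  (forall c, a <= c <= b -> continuity_pt f c) ->
  forall x y, a <= x -> x < y -> y <= b -> f x < f y.
Proof.
intros Hder Hpos Hcont x y Hx Hxy Hy.
set (u := (2 * x + y) / 3); set (v := (x + 2 * y) / 3).
assert (f u < f v).
{ apply (incr_function f a b df); simpl; unfold u, v; try lra.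
  - intros c Hac Hcb; apply Hder; lra.
  - intros c Hac Hcb; apply Hpos; lra. }
assert (f x <= f u) by (apply (nondecreasing_of_derive_pos f df a b Hder Hpos Hcont); unfold u; lra).
assert (f v <= f y) by (apply (nondecreasing_of_derive_pos f df a b Hder Hpos Hcont); unfold v; lra).
lra.
Qed.

Definition sign_change_at (f : R -> R) (a b z : R) : Prop :=
  a < z < b /\
  (forall t, a <= t < z -> f t < 0) /\
  f z = 0 /\
  (forall t, z < t <= b -> 0 < f t).

Lemma sign_change_of_strict_increasing (f : R -> R) (a b : R) :
  a < b ->
  (forall c, a <= c <= b -> continuity_pt f c) ->
  (forall x y, a <= x -> x < y -> y <= b -> f x < f y) ->
  f a < 0 -> 0 < f b ->
  exists z, sign_change_at f a b z.
Proof.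
intros Hab Hcont Hincr Ha Hb.
destruct (Ranalysis5.IVT_interv f a b Hcont Hab Ha Hb) as [z [Hz Hfz]].
assert (a <> z) by (intros <-; lra).
assert (z <> b) by (intros ->; lra).
exists z; repeat split; try lra.
- intros t Ht; rewrite <- Hfz; apply Hincr; lra.
- intros t Ht; rewrite <- Hfz; apply Hincr; lra.
Qed.

Lemma sign_change_at_ext (f g : R -> R) (a b z : R) :
  (forall t, a <= t <= b -> f t = g t) ->
  sign_change_at f a b z -> sign_change_at g a b z.
Proof.
intros Hfg [Hz [Hneg [H0 Hpos]]]; repeat split; try lra.
- intros t Ht; rewrite <- Hfg by lra; apply Hneg; lra.
- rewrite <- Hfg by lra; exact H0.
- intros t Ht; rewrite <- Hfg by lra; apply Hpos; lra.
Qed.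

Lemma sign_change_at_mulr (f p : R -> R) (a b z : R) :
  (forall t, a <= t <= b -> 0 < p t) ->
  sign_change_at (fun t => f t * p t) a b z <-> sign_change_at f a b z.
Proof.
intro Hp; split; intros [Hz [Hneg [H0 Hpos]]]; repeat split; try lra.
- intros t Ht; specialize (Hneg t Ht); specialize (Hp t ltac:(lra)); nra.
- specialize (Hp z ltac:(lra)); destruct (Rmult_integral _ _ H0); lra.
- intros t Ht; specialize (Hpos t Ht); specialize (Hp t ltac:(lra)); nra.
- intros t Ht; specialize (Hneg t Ht); specialize (Hp t ltac:(lra)); nra.
- rewrite H0; ring.
- intros t Ht; specialize (Hpos t Ht); specialize (Hp t ltac:(lra)); nra.
Qed.

Section ChainRule.

Variables (a b : R) (alpha : R -> R) (Lam : R -> R -> R).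
Hypothesis alpha_derivable : forall z, a <= z <= b -> ex_derive alpha z.
Hypothesis alpha'_derivable : forall z, a <= z <= b -> ex_derive (Derive alpha) z.
Hypothesis alpha_pos : forall z, a <= z <= b -> 0 < alpha z.
Hypothesis Lam_derivable1 :
  forall x y, 0 < x -> 0 < y -> ex_derive (fun t => Lam t y) x.
Hypothesis pd1_Lam_derivable1 :
  forall x y, 0 < x -> 0 < y -> ex_derive (fun t => pd1 Lam t y) x.
Hypothesis pd1_Lam_pos : forall x y, 0 < x -> 0 < y -> 0 < pd1 Lam x y.

Lemma pd1_Lam_alpha_pos z2 : a <= z2 <= b ->
  forall z, a <= z <= b -> 0 < pd1 Lam (alpha z) (alpha z2).
Proof. intros Hz2 z Hz; apply pd1_Lam_pos; apply alpha_pos; lra. Qed.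

Lemma d1lamE z z2 : a <= z <= b -> a <= z2 <= b ->
  d1lam Lam alpha z z2 = Derive alpha z * pd1 Lam (alpha z) (alpha z2).
Proof.
intros Hz Hz2; apply is_derive_unique.
apply (is_derive_comp (fun t => Lam t (alpha z2)) alpha z); apply Derive_correct.
- apply Lam_derivable1; apply alpha_pos; lra.
- apply alpha_derivable; lra.
Qed.

Lemma continuity_pt_d1lam_chain z2 : a <= z2 <= b -> forall z, a <= z <= b ->
  continuity_pt (fun t => Derive alpha t * pd1 Lam (alpha t) (alpha z2)) z.
Proof.
intros Hz2 z Hz; apply continuity_pt_mult; apply continuity_pt_filterlim.
- exact (ex_derive_continuous _ _ (alpha'_derivable z Hz)).
- apply (continuous_comp alpha (fun t => pd1 Lam t (alpha z2))).
  + exact (ex_derive_continuous _ _ (alpha_derivable z Hz)).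
  + exact (ex_derive_continuous _ _
      (pd1_Lam_derivable1 _ _ (alpha_pos z Hz) (alpha_pos z2 Hz2))).
Qed.

Lemma is_derive_d1lam_chain z2 : a <= z2 <= b -> forall z, a < z < b ->
  is_derive (fun t => Derive alpha t * pd1 Lam (alpha t) (alpha z2)) z
    (d11lam Lam alpha z z2).
Proof.
intros Hz2 z Hz.
assert (Hloc : locally z (fun t =>
  Derive alpha t * pd1 Lam (alpha t) (alpha z2) = d1lam Lam alpha t z2)).
{ apply (locally_interval _ z a b); simpl; try lra.
  intros t Hat Htb; symmetry; apply d1lamE; lra. }
assert (Hex : ex_derive (fun t => Derive alpha t * pd1 Lam (alpha t) (alpha z2)) z).
{ apply ex_derive_mult; [apply alpha'_derivable; lra|].
  apply (ex_derive_comp (fun t => pd1 Lam t (alpha z2)) alpha).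
  - apply pd1_Lam_derivable1; apply alpha_pos; lra.
  - apply alpha_derivable; lra. }
assert (Hd := Derive_correct _ _ Hex).
replace (d11lam Lam alpha z z2) with (Derive (fun t =>
  Derive alpha t * pd1 Lam (alpha t) (alpha z2)) z); [exact Hd|].
symmetry; apply is_derive_unique, (is_derive_ext_loc _ _ _ _ Hloc Hd).
Qed.

Lemma d1lam_lt0_iff z z2 : a <= z <= b -> a <= z2 <= b ->
  d1lam Lam alpha z z2 < 0 <-> Derive alpha z < 0.
Proof.
intros Hz Hz2; rewrite d1lamE by assumption.
pose proof (pd1_Lam_alpha_pos z2 Hz2 z Hz); split; intro; nra.
Qed.

Lemma d1lam_gt0_iff z z2 : a <= z <= b -> a <= z2 <= b ->
  0 < d1lam Lam alpha z z2 <-> 0 < Derive alpha z.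
Proof.
intros Hz Hz2; rewrite d1lamE by assumption.
pose proof (pd1_Lam_alpha_pos z2 Hz2 z Hz); split; intro; nra.
Qed.

Lemma sign_change_d1lam z2 zmin : a <= z2 <= b ->
  sign_change_at (Derive alpha) a b zmin <->
  sign_change_at (fun t => d1lam Lam alpha t z2) a b zmin.
Proof.
intro Hz2; rewrite <- (sign_change_at_mulr (Derive alpha) _ a b zmin
  (pd1_Lam_alpha_pos z2 Hz2)).
split; apply sign_change_at_ext; intros t Ht; rewrite d1lamE; lra.
Qed.

Lemma exists_sign_change_d1lam z2 : a < b -> a <= z2 <= b ->
  (forall z, a < z < b -> 0 < d11lam Lam alpha z z2) ->
  d1lam Lam alpha a z2 < 0 -> 0 < d1lam Lam alpha b z2 ->
  exists zmin, sign_change_at (fun t => d1lam Lam alpha t z2) a b zmin.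
Proof.
intros Hab Hz2 Hconvex Ha Hb.
(* [d1lam (.) z2] agrees with the chain-rule expression only on [a, b]; the latter is the one that
   is continuous at the endpoints, as IVT requires. *)
set (h := fun t => Derive alpha t * pd1 Lam (alpha t) (alpha z2)).
assert (Hh : forall t, a <= t <= b -> h t = d1lam Lam alpha t z2)
  by (intros t Ht; symmetry; apply d1lamE; lra).
destruct (sign_change_of_strict_increasing h a b Hab
  (continuity_pt_d1lam_chain z2 Hz2)
  (strict_increasing_of_derive_pos h _ a b (is_derive_d1lam_chain z2 Hz2) Hconvex
     (continuity_pt_d1lam_chain z2 Hz2))) as [zmin Hzmin];
  try (rewrite Hh; lra).
exists zmin; exact (sign_change_at_ext h _ a b zmin Hh Hzmin).
Qed.

End ChainRule.

Theorem lemma6p1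
  (a b : R) (alpha : R -> R) (Lam : R -> R -> R)
  (Hab : a < b)
  (Halpha_smooth : exists eps : R, 0 < eps /\
      smooth_on (fun z => a - eps < z < b + eps) alpha)
  (Halpha_pos : forall z, a <= z <= b -> 0 < alpha z)
  (HLam_smooth : smooth2_on (fun x y => 0 < x /\ 0 < y) Lam)
  (HLam_incr : forall x y, 0 < x -> 0 < y -> 0 < pd1 Lam x y)
  (H1 : exists K : R, 0 < K /\
      (forall z1 z2, a < z1 < b -> a < z2 < b ->
         2 * K <= d11lam Lam alpha z1 z2 <= 2 / K) /\
      d1lam Lam alpha a a < 0 /\ 0 < d1lam Lam alpha b b) :
  exists zmin : R, a < zmin < b /\
    (forall z, a <= z < zmin -> Derive alpha z < 0) /\
    Derive alpha zmin = 0 /\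
    (forall z, zmin < z <= b -> 0 < Derive alpha z) /\
    (forall z2, a <= z2 <= b ->
       (forall z, a <= z < zmin -> d1lam Lam alpha z z2 < 0) /\
       d1lam Lam alpha zmin z2 = 0 /\
       (forall z, zmin < z <= b -> 0 < d1lam Lam alpha z z2)).
Proof.
destruct Halpha_smooth as [eps [Heps Hsm]].
destruct H1 as [K [HK [HK2 [Ha Hb]]]].
assert (Hda : forall z, a <= z <= b -> ex_derive alpha z)
  by (intros z Hz; exact (Hsm 0%nat z ltac:(lra))).
assert (Hdda : forall z, a <= z <= b -> ex_derive (Derive alpha) z)
  by (intros z Hz; exact (Hsm 1%nat z ltac:(lra))).
assert (HL0 : forall x y, 0 < x -> 0 < y -> ex_derive (fun t => Lam t y) x)
  by (intros x y Hx Hy; exact (proj1 (HLam_smooth nil x y (conj Hx Hy)))).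
assert (HL1 : forall x y, 0 < x -> 0 < y -> ex_derive (fun t => pd1 Lam t y) x)
  by (intros x y Hx Hy; exact (proj1 (HLam_smooth (true :: nil) x y (conj Hx Hy)))).
pose proof (d1lam_lt0_iff a b alpha Lam Hda Halpha_pos HL0 HLam_incr) as Hlt0.
pose proof (d1lam_gt0_iff a b alpha Lam Hda Halpha_pos HL0 HLam_incr) as Hgt0.
pose proof (sign_change_d1lam a b alpha Lam Hda Halpha_pos HL0 HLam_incr) as Hsign.
set (m := (a + b) / 2); assert (Hm : a < m < b) by (unfold m; lra).
destruct (exists_sign_change_d1lam a b alpha Lam Hda Hdda Halpha_pos HL0 HL1 m Hab
  ltac:(lra)) as [zmin Hzmin].
- intros z Hz; pose proof (HK2 z m Hz Hm); lra.
- rewrite Hlt0, <- (Hlt0 a a) by lra; exact Ha.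
- rewrite Hgt0, <- (Hgt0 b b) by lra; exact Hb.
- apply <- (Hsign m zmin) in Hzmin; [|lra].
  exists zmin; pose proof Hzmin as [Hz [Hneg [H0 Hpos]]].
  do 4 (split; [assumption|]); intros z2 Hz2.
  exact (proj2 (proj1 (Hsign z2 zmin Hz2) Hzmin)).
Qed.
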